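(* Under the standing setup below, let $\boldsymbol\beta,\boldsymbol\nu\in(0,\infty)^N$. Then any globally optimal solution $(\mathbf p^\#,\mathbf B^\#)$ of Problem $\mathbb P_3(\boldsymbol\beta,\boldsymbol\nu)$ can be given by $$B_n^\#=\mathcal B_n(\lambda^\#),\qquad p_n^\#=\frac{\sigma_n^2 B_n^\#\,\psi_n(\lambda^\#)}{g_n}\qquad(n\in\mathcal N),$$ where $\lambda^\#>0$ is a solution of $\sum_{n\in\mathcal N}\mathcal B_n(\lambda)=B_{total}$, and for $\lambda\ge 0$: $$\psi_n(\lambda)=\exp\Big\{1+W\Big(\tfrac1e\big(\tfrac{g_n\lambda}{\nu_n\beta_n\sigma_n^2}-1\big)\Big)\Big\}-1,\qquad \mathcal B_n(\lambda)=\frac{\max\{\gamma_n(\lambda),\,r_n^{\min}\}}{\log_2(1+\psi_n(\lambda))},$$ $$\gamma_n(\lambda)=\begin{cases} r_{n,e}+\xi, & \text{if there is } \xi\ge0 \text{ with } f_n'(\xi)=\dfrac{\beta_n\sigma_n^2(1+\psi_n(\lambda))\ln 2}{c_n g_n},\\ r_{n,e}, & \text{otherwise.}\end{cases}$$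
   Context: Standing setup: $N\ge1$ users, $\mathcal N=\{1,\dots,N\}$, total bandwidth $B_{total}>0$. For each $n$: constants $g_n>0$, $\sigma_n^2>0$, $p_n^{cir}>0$, weight $c_n>0$, $r_{n,e}\ge 0$, $r_n^{\min}>0$ with $r_n^{\min}\ge r_{n,e}$. Rate $r_n(p,B)=B\log_2\!\big(1+\frac{g_n p}{\sigma_n^2 B}\big)$ ($p\ge0$, $B>0$), secrecy rate $r_{n,s}(p,B)=r_n(p,B)-r_{n,e}$. Utility $f_n:(0,\infty)\to\mathbb R$ is twice differentiable with $f_n'>0$, $f_n''\le 0$ on $(0,\infty)$; $f_n(0)$, $f_n'(0)$ are defined as the corresponding limits at $0^+$ when finite. $F_n(p,B)=c_n f_n(r_{n,s}(p,B))$. Problem $\mathbb P_3(\boldsymbol\beta,\boldsymbol\nu)$: maximize $\sum_n \nu_n\big(F_n(p_n,B_n)-\beta_n(p_n+p_n^{cir})\big)$ over $(\mathbf p,\mathbf B)$ with $p_n\ge0,B_n>0$ subject to $\sum_n B_n\le B_{total}$ and $r_n(p_n,B_n)\ge r_n^{\min}$ for all $n$. $W$ denotes the principal branch of the Lambert $W$ function: for $z\ge -e^{-1}$, $W(z)$ is the solution $x\ge-1$ of $xe^x=z$. *)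

From Stdlib Require Import Reals Lra List ClassicalEpsilon.
From Coquelicot Require Import Coquelicot.
Open Scope R_scope.

(* Users are indexed 0..N-1 (n < N). *)
Definition rsum (N : nat) (x : nat -> R) : R :=
  fold_right Rplus 0 (map x (seq 0 N)).
Definition Rbar_sum (N : nat) (x : nat -> Rbar) : Rbar :=
  fold_right Rbar_plus (Finite 0) (map x (seq 0 N)).

Definition log2 (x : R) : R := ln x / ln 2.

Definition rate (g s2 p B : R) : R := B * log2 (1 + g * p / (s2 * B)).

(* Principal branch of Lambert W: for z >= -1/e, the x >= -1 with x e^x = z. *)
Definition LambertW (z : R) : R :=
  epsilon (inhabits 0) (fun w => -1 <= w /\ w * exp w = z).

Definition right_lim0 (h : R -> R) : Rbar :=
  epsilon (inhabits m_infty)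
    (fun l => filterlim h (at_right 0) (Rbar_locally l)).

(* f_n extended to 0 by its limit at 0^+ (possibly -oo). *)
Definition fext (h : R -> R) (x : R) : Rbar :=
  if Rlt_dec 0 x then Finite (h x) else right_lim0 h.

Definition feasible (N : nat) (Btot : R) (g s2 rmin : nat -> R)
  (p B : nat -> R) : Prop :=
  (forall n, (n < N)%nat -> 0 <= p n /\ 0 < B n) /\
  rsum N B <= Btot /\
  (forall n, (n < N)%nat -> rmin n <= rate (g n) (s2 n) (p n) (B n)).

Definition objective (N : nat) (g s2 pcir c : nat -> R) (f : nat -> R -> R)
  (re beta nu : nat -> R) (p B : nat -> R) : Rbar :=
  Rbar_sum N (fun n =>
    Rbar_plus
      (Rbar_mult (Finite (nu n * c n))
                 (fext (f n) (rate (g n) (s2 n) (p n) (B n) - re n)))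
      (Finite (- (nu n * beta n * (p n + pcir n))))).

Definition globally_optimal (N : nat) (Btot : R) (g s2 pcir c : nat -> R)
  (f : nat -> R -> R) (re rmin beta nu : nat -> R) (p B : nat -> R) : Prop :=
  feasible N Btot g s2 rmin p B /\
  forall p' B', feasible N Btot g s2 rmin p' B' ->
    Rbar_le (objective N g s2 pcir c f re beta nu p' B')
            (objective N g s2 pcir c f re beta nu p B).

Definition psi (g s2 beta nu lam : R) : R :=
  exp (1 + LambertW (/ exp 1 * (g * lam / (nu * beta * s2) - 1))) - 1.

(* "f'(xi) = v" for xi >= 0, with f'(0) the (finite) limit of f' at 0^+. *)
Definition deriv_value (h : R -> R) (xi v : R) : Prop :=
  (0 < xi /\ Derive h xi = v) \/
  (xi = 0 /\ filterlim (Derive h) (at_right 0) (locally v)).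

Definition gamma_target (g s2 c beta ps : R) : R :=
  beta * s2 * (1 + ps) * ln 2 / (c * g).

Definition is_gamma (h : R -> R) (re v gam : R) : Prop :=
  (exists xi, 0 <= xi /\ deriv_value h xi v /\ gam = re + xi) \/
  ((~ exists xi, 0 <= xi /\ deriv_value h xi v) /\ gam = re).

Definition Bcal (gam rmin ps : R) : R := Rmax gam rmin / log2 (1 + ps).

(* Write r_n = B_n log2 y_n for the rate of user n, where y_n = 1 + g_n p_n/(sigma_n^2 B_n),
   so that p_n = sigma_n^2 B_n (y_n - 1)/g_n.  The proof is a first-order (KKT) analysis of a
   fixed global optimum (p, B), carried out by perturbing it inside the feasible set:
   - reallocating bandwidth between two users at fixed rates shows that every user has the
     same marginal value of bandwidth lambda(y_n) = nu_n beta_n sigma_n^2/g_n (y_n ln y_n - y_n + 1)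
     (the "bandwidth price"), and adding unused bandwidth shows that the budget is exhausted;
   - perturbing the rate of one user at fixed bandwidth gives the stationarity conditions
     f_n'(r_n - r_{n,e}) = target (if r_n > r_n^min), <= target (if r_n > r_{n,e}), and, in the
     corner r_n = r_{n,e}, that f_n' tends to the target at 0^+ whenever it is attained at all.
   The Lambert W function inverts lambda: psi_n(lambda(y)) = y - 1, so lambda# := lambda(y_0)
   reproduces all y_n, and the stationarity conditions yield a value gamma_n of the paper's
   case definition with max(gamma_n, r_n^min) = r_n; this gives B_n = B_n(lambda#) and the power
   formula. *)

From Stdlib Require Import Reals Lra Lia List Classical ClassicalEpsilon.
From Coquelicot Require Import Coquelicot.
Open Scope R_scope.

Lemma ball_R (c d u : R) : ball c d u <-> Rabs (u - c) < d.
Proof. reflexivity. Qed.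

Lemma at_right_intro (P : R -> Prop) (d : R) :
  0 < d -> (forall u, 0 < u < d -> P u) -> at_right 0 P.
Proof.
  intros Hd H. exists (mkposreal d Hd). intros u Hu Hpos. apply H.
  assert (Habs : Rabs (u - 0) < d) by exact Hu.
  rewrite Rminus_0_r, Rabs_right in Habs; lra.
Qed.

Lemma local_max_right (h : R -> R) (x l d : R) :
  is_derive h x l -> 0 < d -> (forall y, x < y < x + d -> h y <= h x) -> l <= 0.
Proof.
  intros Hder Hd Hmax. apply is_derive_Reals in Hder. apply Rnot_lt_le. intro Hl.
  destruct (Hder (l / 2) ltac:(lra)) as [[e He] Hq]. simpl in Hq.
  set (t := Rmin d e / 2).
  assert (Ht : 0 < t < d /\ t < e) by (unfold t, Rmin; destruct Rle_dec; lra).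
  specialize (Hq t ltac:(lra) ltac:(rewrite Rabs_right; lra)).
  specialize (Hmax (x + t) ltac:(lra)).
  apply Rabs_def2 in Hq.
  assert ((h (x + t) - h x) / t <= 0).
  { apply Rmult_le_0_r; [lra|]. left. apply Rinv_0_lt_compat. lra. }
  lra.
Qed.

Lemma local_max_left (h : R -> R) (x l d : R) :
  is_derive h x l -> 0 < d -> (forall y, x - d < y < x -> h y <= h x) -> 0 <= l.
Proof.
  intros Hder Hd Hmax.
  assert (Hopp : is_derive (fun y => h (- y)) (- x) (- l)).
  { replace (- l) with (scal (-1) l) by (unfold scal; simpl; unfold mult; simpl; ring).
    apply (is_derive_comp h Ropp (- x) l (-1)); [rewrite Ropp_involutive; exact Hder|].
    auto_derive; [exact I | ring]. }
  enough (- l <= 0) by lra.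
  apply (local_max_right _ _ _ d Hopp Hd). intros y Hy.
  rewrite Ropp_involutive. apply Hmax. lra.
Qed.

Lemma mean_value (h : R -> R) (a b : R) :
  a < b -> (forall x, a <= x <= b -> ex_derive h x) ->
  exists c, a < c < b /\ h b - h a = Derive h c * (b - a).
Proof.
  intros Hab Hd. destruct (MVT_cor2 h (Derive h) a b Hab) as [c [Hc Hin]].
  - intros c Hc. apply is_derive_Reals, Derive_correct, Hd, Hc.
  - exists c. split; assumption.
Qed.

Lemma increasing_of_derive (h : R -> R) :
  (forall x, 0 < x -> ex_derive h x /\ 0 < Derive h x) ->
  forall a b, 0 < a -> a < b -> h a < h b.
Proof.
  intros Hd a b Ha Hab.
  apply (incr_function h 0 p_infty (Derive h)); simpl; try easy;
    intros x Hx _; apply Hd in Hx as [Hex Hpos]; [apply Derive_correct, Hex | exact Hpos].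
Qed.

Lemma derive_nonincreasing (h : R -> R) :
  (forall x, 0 < x -> ex_derive (Derive h) x /\ Derive (Derive h) x <= 0) ->
  forall a b, 0 < a -> a <= b -> Derive h b <= Derive h a.
Proof.
  intros Hd a b Ha Hab. destruct (Req_dec a b) as [<-|Hne]; [lra|].
  destruct (mean_value (Derive h) a b) as [c [Hc Hmv]]; [lra| intros x Hx; apply Hd; lra |].
  assert (Derive (Derive h) c <= 0) by (apply Hd; lra). nra.
Qed.

(* An increasing function on (0, oo) has a limit at 0^+, namely the infimum of its values;
   it is finite or -oo. *)
Lemma increasing_right_limit (h : R -> R) :
  (forall a b, 0 < a -> a < b -> h a < h b) ->
  exists l, l <> p_infty /\ filterlim h (at_right 0) (Rbar_locally l).
Proof.
  intros Hinc.
  set (L := Glb_Rbar (fun y => exists x, 0 < x /\ y = h x)).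
  destruct (Glb_Rbar_correct (fun y => exists x, 0 < x /\ y = h x)) as [Hlb Hglb].
  fold L in Hlb, Hglb.
  assert (Hlow : forall u, 0 < u -> Rbar_le L (h u))
    by (intros u Hu; apply Hlb; exists u; split; [exact Hu | reflexivity]).
  assert (Hnear : forall M : R, Rbar_lt L M -> at_right 0 (fun u => h u < M)).
  { intros M HM.
    assert (Hx0 : exists x0, 0 < x0 /\ h x0 < M).
    { apply NNPP. intro Hno. apply (Rbar_lt_not_le _ _ HM), Hglb.
      intros y [x [Hx ->]]. apply Rnot_lt_le. intro Hlt. apply Hno. eauto. }
    destruct Hx0 as [x0 [Hx0 Hhx0]].
    apply at_right_intro with x0; [exact Hx0|]. intros u Hu.
    assert (h u < h x0) by (apply Hinc; lra). lra. }
  exists L. destruct L as [l| |] eqn:EL.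
  - split; [discriminate|]. intros P [eps Heps].
    assert (Hpos : at_right 0 (fun u => 0 < u))
      by (apply at_right_intro with 1; [lra | intros u Hu; lra]).
    change (at_right 0 (fun u => P (h u))).
    apply (filter_imp (fun u => h u < l + eps /\ 0 < u)).
    + intros u [Hu Hu0]. apply Heps, ball_R.
      specialize (Hlow u Hu0). simpl in Hlow. rewrite Rabs_right; lra.
    + apply filter_and; [apply Hnear; simpl; destruct eps; simpl; lra | exact Hpos].
  - specialize (Hlow 1 Rlt_0_1). contradiction.
  - split; [discriminate|]. intros P [M HM].
    change (at_right 0 (fun u => P (h u))).
    apply (filter_imp (fun u => h u < M)); [intros u; apply HM | apply Hnear; exact I].
Qed.

Lemma right_lim0_spec (h : R -> R) :
  (forall a b, 0 < a -> a < b -> h a < h b) ->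
  right_lim0 h <> p_infty /\ filterlim h (at_right 0) (Rbar_locally (right_lim0 h)).
Proof.
  intros Hinc.
  destruct (increasing_right_limit h Hinc) as [l [_ Hl]].
  assert (Hlim : filterlim h (at_right 0) (Rbar_locally (right_lim0 h)))
    by exact (epsilon_spec (inhabits m_infty)
         (fun l => filterlim h (at_right 0) (Rbar_locally l)) (ex_intro _ l Hl)).
  split; [|exact Hlim]. intro Hp.
  assert (Hle : Rbar_le (right_lim0 h) (h 1)).
  { apply (filterlim_le (F := at_right 0)) with h (fun _ => h 1);
      [| exact Hlim | apply filterlim_const].
    apply at_right_intro with 1; [lra|]. intros u Hu. left. apply Hinc; lra. }
  rewrite Hp in Hle. exact Hle.
Qed.

(* Concavity: the tangent line at s lies above the graph, so its intercept bounds the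
   limit at 0^+: lim_{0+} h <= h s - s h'(s). *)
Lemma concave_tangent_bound (h : R -> R) (F s : R) :
  (forall x, 0 < x -> ex_derive h x) ->
  (forall a b, 0 < a -> a <= b -> Derive h b <= Derive h a) ->
  filterlim h (at_right 0) (locally F) -> 0 < s -> F <= h s - s * Derive h s.
Proof.
  intros Hd Hdec Hlim Hs.
  set (chord := fun u => h s - (s - u) * Derive h s).
  assert (Hchord : filterlim chord (at_right 0) (locally (h s - s * Derive h s))).
  { replace (h s - s * Derive h s) with (chord 0) by (unfold chord; ring).
    apply (filterlim_filter_le_1 (F := locally 0)); [apply filter_le_within|].
    apply (ex_derive_continuous (V := R_NormedModule) chord 0).
    unfold chord. auto_derive. exact I. }
  apply (filterlim_le (F := at_right 0) h chord F (h s - s * Derive h s));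
    [| exact Hlim | exact Hchord].
  apply at_right_intro with s; [exact Hs|]. intros u Hu.
  destruct (mean_value h u s) as [c [Hc Hmv]]; [lra | intros x Hx; apply Hd; lra |].
  assert (Derive h s <= Derive h c) by (apply Hdec; lra).
  unfold chord. nra.
Qed.

(* If h is concave, a (h s - h(0+)) <= b (q s - q 0) for s > 0, and the value
   b q'(0)/a is attained by h' at some xi > 0, then h' tends to this value at 0^+: it is
   bounded below by h'(xi) and above, via the tangent bound, by the slopes of q. *)
Lemma derivative_limit_at_corner (h q : R -> R) (F L a b xi : R) :
  (forall x, 0 < x -> ex_derive h x) ->
  (forall x y, 0 < x -> x <= y -> Derive h y <= Derive h x) ->
  filterlim h (at_right 0) (locally F) -> 0 < a -> 0 < b ->
  (forall s, 0 < s -> a * (h s - F) <= b * (q s - q 0)) ->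
  is_derive q 0 L -> 0 < xi -> Derive h xi = b * L / a ->
  filterlim (Derive h) (at_right 0) (locally (b * L / a)).
Proof.
  intros Hd Hdec Hlim Ha Hb Hdom Hq Hxi Hval.
  apply is_derive_Reals in Hq.
  apply filterlim_locally. intros [eps Heps]. simpl.
  destruct (Hq (eps * a / b)) as [[d Hd0] Hquot]; [apply Rdiv_lt_0_compat; nra|]. simpl in Hquot.
  apply at_right_intro with (Rmin d xi); [unfold Rmin; destruct Rle_dec; lra|].
  intros s Hs. assert (Hsd : s < d /\ s < xi) by (unfold Rmin in Hs; destruct Rle_dec; lra).
  assert (Hlow : b * L / a <= Derive h s) by (rewrite <- Hval; apply Hdec; lra).
  assert (Htan := concave_tangent_bound h F s Hd Hdec Hlim ltac:(lra)).
  assert (Hslope : (q s - q 0) / s < L + eps * a / b).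
  { specialize (Hquot s ltac:(lra) ltac:(rewrite Rabs_right; lra)).
    rewrite Rplus_0_l in Hquot. apply Rabs_def2 in Hquot. lra. }
  assert (Hcost : q s - q 0 < s * (L + eps * a / b)).
  { apply Rlt_div_l in Hslope; lra. }
  assert (Hup : a * s * Derive h s < a * s * (b * L / a + eps)).
  { replace (a * s * (b * L / a + eps)) with (b * (s * (L + eps * a / b))) by (field; lra).
    specialize (Hdom s ltac:(lra)). nra. }
  apply ball_R, Rabs_def1; [|lra].
  apply Rmult_lt_reg_l with (a * s); nra.
Qed.

(* x e^x is strictly increasing on [-1, oo), so the principal branch of W is unique. *)
Lemma xexp_strict_increasing (u v : R) : -1 <= u -> u < v -> u * exp u < v * exp v.
Proof.
  intros Hu Huv. destruct (Rle_lt_dec u 0) as [Hu0|Hu0].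
  - assert (Hsplit : exp u = exp v * exp (u - v)) by (rewrite <- exp_plus; f_equal; ring).
    assert (Htan : 1 + (u - v) < exp (u - v)) by (apply exp_ineq1; lra).
    assert (Hv : 0 < exp v) by apply exp_pos.
    assert (Hbound : u * exp (u - v) < v).
    { destruct (Req_dec u 0) as [->|Hne]; [rewrite Rmult_0_l; lra|].
      assert (u * exp (u - v) < u * (1 + (u - v))) by (apply Rmult_lt_gt_compat_neg_l; lra).
      nra. }
    rewrite Hsplit, <- Rmult_assoc, (Rmult_comm u), Rmult_assoc.
    rewrite (Rmult_comm v). apply Rmult_lt_compat_l; assumption.
  - assert (exp u < exp v) by (apply exp_increasing; lra).
    assert (0 < exp u) by apply exp_pos. nra.
Qed.

Lemma LambertW_eq (w z : R) : -1 <= w -> w * exp w = z -> LambertW z = w.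
Proof.
  intros Hw Hwz. unfold LambertW.
  destruct (epsilon_spec (inhabits 0) (fun x => -1 <= x /\ x * exp x = z)
              (ex_intro _ w (conj Hw Hwz))) as [He Hez].
  set (e := epsilon _ _) in *.
  destruct (Rtotal_order e w) as [Hlt|[Heq|Hgt]]; [| exact Heq |].
  - assert (e * exp e < w * exp w) by (apply xexp_strict_increasing; assumption). lra.
  - assert (w * exp w < e * exp e) by (apply xexp_strict_increasing; assumption). lra.
Qed.

Lemma ln_pos_gt1 (y : R) : 1 < y -> 0 < ln y.
Proof. intros Hy. rewrite <- ln_1. apply ln_increasing; lra. Qed.

Lemma ln2_pos : 0 < ln 2.
Proof. apply ln_pos_gt1. lra. Qed.

(* The marginal value of bandwidth of a user with 1 + SNR equal to y (the KKT multiplier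
   of the bandwidth budget): lambda(y) = nu beta sigma^2/g (y ln y - y + 1). *)
Definition bandwidth_price (g s2 beta nu y : R) : R :=
  nu * beta * s2 / g * (y * ln y - y + 1).

Lemma bandwidth_price_pos (g s2 beta nu y : R) :
  0 < g -> 0 < s2 -> 0 < beta -> 0 < nu -> 1 < y -> 0 < bandwidth_price g s2 beta nu y.
Proof.
  intros Hg Hs Hb Hnu Hy. unfold bandwidth_price.
  assert (Hu := ln_pos_gt1 y Hy).
  assert (Hinv : 1 + - ln y < exp (- ln y)) by (apply exp_ineq1; lra).
  rewrite exp_Ropp, exp_ln in Hinv by lra.
  assert (Hconv : 0 < y * ln y - y + 1).
  { apply (Rmult_lt_compat_l y) in Hinv; [|lra]. rewrite Rinv_r in Hinv; lra. }
  apply Rmult_lt_0_compat; [|exact Hconv].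
  apply Rdiv_lt_0_compat; [|exact Hg]. repeat apply Rmult_lt_0_compat; assumption.
Qed.

(* The Lambert-W formula of psi inverts the price: psi(lambda(y)) = y - 1, because the
   argument of W is (ln y - 1) e^(ln y - 1), so that W returns ln y - 1. *)
Lemma psi_at_price (g s2 beta nu y : R) :
  0 < g -> 0 < s2 -> 0 < beta -> 0 < nu -> 1 < y ->
  psi g s2 beta nu (bandwidth_price g s2 beta nu y) = y - 1.
Proof.
  intros Hg Hs Hb Hnu Hy. unfold psi, bandwidth_price.
  assert (Hw : LambertW (/ exp 1 * (g * (nu * beta * s2 / g * (y * ln y - y + 1))
                                    / (nu * beta * s2) - 1)) = ln y - 1).
  { apply LambertW_eq; [assert (Hu := ln_pos_gt1 y Hy); lra|].
    assert (Hexp : exp (ln y - 1) = y * / exp 1)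
      by (unfold Rminus; rewrite exp_plus, exp_ln, exp_Ropp; lra).
    rewrite Hexp. assert (0 < exp 1) by apply exp_pos.
    field. repeat split; apply Rgt_not_eq; nra. }
  rewrite Hw. replace (1 + (ln y - 1)) with (ln y) by ring. rewrite exp_ln; lra.
Qed.

Definition power_for_rate (g s2 r B : R) : R := s2 * B * (exp (r * ln 2 / B) - 1) / g.

Definition snr1 (g s2 p B : R) : R := 1 + g * p / (s2 * B).

Lemma rate_power_for_rate (g s2 r B : R) :
  0 < g -> 0 < s2 -> 0 < B -> rate g s2 (power_for_rate g s2 r B) B = r.
Proof.
  intros Hg Hs HB. assert (H2 := ln2_pos). unfold rate, power_for_rate, log2.
  replace (1 + g * (s2 * B * (exp (r * ln 2 / B) - 1) / g) / (s2 * B))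
    with (exp (r * ln 2 / B)) by (field; lra).
  rewrite ln_exp. field. lra.
Qed.

Lemma power_for_rate_nonneg (g s2 r B : R) :
  0 < g -> 0 < s2 -> 0 < B -> 0 <= r -> 0 <= power_for_rate g s2 r B.
Proof.
  intros Hg Hs HB Hr. assert (H2 := ln2_pos). unfold power_for_rate.
  assert (0 <= r * ln 2 / B) by (apply Rmult_le_pos; [nra | left; apply Rinv_0_lt_compat; lra]).
  assert (1 + r * ln 2 / B <= exp (r * ln 2 / B)) by apply exp_ineq1_le.
  apply Rmult_le_pos; [|left; apply Rinv_0_lt_compat; lra]. apply Rmult_le_pos; nra.
Qed.

Lemma rate_snr1 (g s2 p B : R) :
  0 < g -> 0 < s2 -> 0 < B -> 0 <= p ->
  exp (rate g s2 p B * ln 2 / B) = snr1 g s2 p B /\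
  p = power_for_rate g s2 (rate g s2 p B) B.
Proof.
  intros Hg Hs HB Hp. assert (H2 := ln2_pos).
  assert (Hq : 0 <= g * p / (s2 * B))
    by (apply Rmult_le_pos; [nra | left; apply Rinv_0_lt_compat; nra]).
  assert (Hexp : exp (rate g s2 p B * ln 2 / B) = snr1 g s2 p B).
  { unfold rate, log2, snr1.
    replace (B * (ln (1 + g * p / (s2 * B)) / ln 2) * ln 2 / B) with (ln (1 + g * p / (s2 * B)))
      by (field; lra).
    apply exp_ln. lra. }
  split; [exact Hexp|]. unfold power_for_rate. rewrite Hexp. unfold snr1. field. lra.
Qed.

Lemma snr1_gt1 (g s2 p B : R) :
  0 < g -> 0 < s2 -> 0 < B -> 0 <= p -> 0 < rate g s2 p B -> 1 < snr1 g s2 p B.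
Proof.
  intros Hg Hs HB Hp Hr. assert (H2 := ln2_pos).
  rewrite <- (proj1 (rate_snr1 g s2 p B Hg Hs HB Hp)).
  rewrite <- exp_0. apply exp_increasing.
  apply Rdiv_lt_0_compat; [apply Rmult_lt_0_compat|]; assumption.
Qed.

Lemma power_rate_derivative (g s2 r B : R) :
  0 < g -> 0 < B ->
  is_derive (fun s => power_for_rate g s2 (r + s) B) 0 (s2 / g * ln 2 * exp (r * ln 2 / B)).
Proof.
  intros Hg HB. unfold power_for_rate. auto_derive; [exact I|].
  unfold Rdiv. rewrite Rplus_0_r. field. lra.
Qed.

Lemma power_bandwidth_derivative (g s2 beta nu r B sigma : R) :
  0 < g -> 0 < B ->
  is_derive (fun t => - (nu * beta * power_for_rate g s2 r (B + sigma * t))) 0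
    (sigma * bandwidth_price g s2 beta nu (exp (r * ln 2 / B))).
Proof.
  intros Hg HB. unfold power_for_rate, bandwidth_price. auto_derive; [lra|].
  unfold Rdiv. rewrite Rmult_0_r, Rplus_0_r, ln_exp. field. lra.
Qed.

Lemma allocation_from_rate (g s2 p B gm rmin : R) :
  0 < g -> 0 < s2 -> 0 < B -> 0 <= p -> 0 < rate g s2 p B ->
  Rmax gm rmin = rate g s2 p B ->
  B = Bcal gm rmin (snr1 g s2 p B - 1) /\ p = s2 * B * (snr1 g s2 p B - 1) / g.
Proof.
  intros Hg Hs HB Hp Hr Hmax.
  assert (Hy := snr1_gt1 g s2 p B Hg Hs HB Hp Hr).
  assert (Hln := ln_pos_gt1 _ Hy). assert (H2 := ln2_pos).
  unfold Bcal. rewrite Hmax. replace (1 + (snr1 g s2 p B - 1)) with (snr1 g s2 p B) by ring.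
  unfold rate, log2, snr1 in *. split; field; lra.
Qed.

Lemma rsum_ext (N : nat) (t u : nat -> R) :
  (forall k, (k < N)%nat -> t k = u k) -> rsum N t = rsum N u.
Proof.
  intros H. unfold rsum. f_equal. apply map_ext_in. intros k Hk.
  apply in_seq in Hk. apply H. lia.
Qed.

Lemma rsum_const (N : nat) (a : R) : rsum N (fun _ => a) = INR N * a.
Proof.
  unfold rsum. rewrite <- (length_seq N 0) at 2. generalize (seq 0 N).
  intros l. induction l as [|k l IH]; simpl; [ring|]. rewrite IH.
  destruct (length l); simpl; ring.
Qed.

Definition update (n : nat) (x : R) (u : nat -> R) : nat -> R :=
  fun k => if Nat.eqb k n then x else u k.

Lemma update_eq (n : nat) (x : R) (u : nat -> R) : update n x u n = x.
Proof. unfold update. rewrite Nat.eqb_refl. reflexivity. Qed.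

Lemma update_neq (n k : nat) (x : R) (u : nat -> R) : k <> n -> update n x u k = u k.
Proof. intros Hne. unfold update. destruct (Nat.eqb_spec k n); [contradiction | reflexivity]. Qed.

Lemma rsum_update (N n : nat) (X : R) (t : nat -> R) : (n < N)%nat ->
  rsum N (update n X t) = rsum N t + (X - t n).
Proof.
  intros Hn. unfold rsum, update.
  assert (Hnd := seq_NoDup N 0). assert (Hin : In n (seq 0 N)) by (apply in_seq; lia).
  revert Hnd Hin. induction (seq 0 N) as [|a l IH]; intros Hnd Hin; [destruct Hin|].
  simpl. inversion Hnd; subst.
  destruct (Nat.eqb_spec a n) as [->|Hne].
  - rewrite (map_ext_in _ t l); [ring|]. intros k Hk.
    destruct (Nat.eqb_spec k n); [subst; contradiction | reflexivity].
  - destruct Hin as [->|Hin]; [contradiction|]. rewrite IH by assumption. ring.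
Qed.

Lemma Rbar_sum_finite (N : nat) (T : nat -> Rbar) (t : nat -> R) :
  (forall k, (k < N)%nat -> T k = Finite (t k)) -> Rbar_sum N T = Finite (rsum N t).
Proof.
  intros H. unfold Rbar_sum, rsum.
  assert (Hin : forall k, In k (seq 0 N) -> T k = Finite (t k))
    by (intros k Hk; apply in_seq in Hk; apply H; lia).
  revert Hin. induction (seq 0 N) as [|a l IH]; intros Hin; simpl; [reflexivity|].
  rewrite IH, Hin; [reflexivity | simpl; auto | intros k Hk; apply Hin; simpl; auto].
Qed.

Lemma Rbar_sum_terms_finite (N : nat) (T : nat -> Rbar) :
  (forall k, (k < N)%nat -> T k <> p_infty) -> Rbar_sum N T <> m_infty ->
  forall k, (k < N)%nat -> T k <> m_infty.
Proof.
  intros Hp. unfold Rbar_sum.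
  assert (Hin : forall k, In k (seq 0 N) -> T k <> p_infty)
    by (intros k Hk; apply in_seq in Hk; apply Hp; lia).
  enough (Hl : fold_right Rbar_plus (Finite 0) (map T (seq 0 N)) <> p_infty /\
               (fold_right Rbar_plus (Finite 0) (map T (seq 0 N)) <> m_infty ->
                forall k, In k (seq 0 N) -> T k <> m_infty)).
  { intros Hm k Hk. apply (proj2 Hl Hm), in_seq. lia. }
  revert Hin. induction (seq 0 N) as [|a l IH]; intros Hin; simpl;
    [split; [discriminate | tauto]|].
  destruct IH as [IHp IHm]; [intros k Hk; apply Hin; simpl; auto|].
  assert (Ha := Hin a (or_introl eq_refl)).
  destruct (T a) as [x| |] eqn:Ea; [|contradiction|];
    destruct (fold_right Rbar_plus (Finite 0) (map T l)) as [y| |];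
    try contradiction; simpl; split; try discriminate; try tauto.
  intros _ k [<-|Hk]; [rewrite Ea; discriminate | apply IHm; [discriminate | exact Hk]].
Qed.

Lemma gamma_from_optimality (h : R -> R) (re rmin r T : R) :
  (forall a b, 0 < a -> a <= b -> Derive h b <= Derive h a) ->
  re <= rmin -> rmin <= r ->
  (rmin < r -> Derive h (r - re) = T) ->
  (re < r -> Derive h (r - re) <= T) ->
  (r = re -> (exists xi, 0 <= xi /\ deriv_value h xi T) -> deriv_value h 0 T) ->
  exists gm, is_gamma h re T gm /\ Rmax gm rmin = r.
Proof.
  intros Hdec Hre Hr Hstat Hupper Hcorner.
  destruct (Rle_lt_or_eq_dec _ _ Hr) as [Hlt|<-].
  - exists r. split; [|apply Rmax_left; lra].
    left. exists (r - re). split; [lra|]. split; [|ring].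
    left. split; [lra | apply Hstat, Hlt].
  - destruct (classic (exists xi, 0 <= xi /\ deriv_value h xi T)) as [Hex|Hno].
    + destruct (Rle_lt_or_eq_dec _ _ Hre) as [Hlt|Heq].
      * destruct Hex as [xi [Hxi Hdv]].
        destruct (Rle_lt_dec xi (rmin - re)) as [Hsmall|Hbig].
        -- exists (re + xi). split; [left; exists xi; auto | apply Rmax_right; lra].
        -- destruct Hdv as [[_ HD]|[Hx0 _]]; [|lra].
           assert (Derive h xi <= Derive h (rmin - re)) by (apply Hdec; lra).
           assert (Derive h (rmin - re) <= T) by (apply Hupper, Hlt).
           exists rmin. split; [|apply Rmax_left; lra].
           left. exists (rmin - re). split; [lra|]. split; [left; split; lra | ring].
      * exists re. split; [|apply Rmax_right; lra].
        left. exists 0. split; [lra|]. split; [apply Hcorner; auto | ring].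
    + exists re. split; [right; split; [exact Hno | reflexivity] | apply Rmax_right; lra].
Qed.

Definition user_value (g s2 pcir c : R) (h : R -> R) (re beta nu p B : R) : Rbar :=
  Rbar_plus (Rbar_mult (Finite (nu * c)) (fext h (rate g s2 p B - re)))
            (Finite (- (nu * beta * (p + pcir)))).

Lemma objective_as_sum (N : nat) (g s2 pcir c : nat -> R) (f : nat -> R -> R)
  (re beta nu p B : nat -> R) :
  objective N g s2 pcir c f re beta nu p B =
  Rbar_sum N (fun n =>
    user_value (g n) (s2 n) (pcir n) (c n) (f n) (re n) (beta n) (nu n) (p n) (B n)).
Proof. reflexivity. Qed.

Lemma user_value_finite (g s2 pcir c : R) (h : R -> R) (re beta nu p B F : R) :
  fext h (rate g s2 p B - re) = Finite F ->
  user_value g s2 pcir c h re beta nu p B = Finite (nu * c * F - nu * beta * (p + pcir)).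
Proof. intros HF. unfold user_value. rewrite HF. reflexivity. Qed.

Lemma user_value_cases (g s2 pcir c : R) (h : R -> R) (re beta nu p B : R) :
  0 < nu * c -> fext h (rate g s2 p B - re) <> p_infty ->
  user_value g s2 pcir c h re beta nu p B <> p_infty /\
  (user_value g s2 pcir c h re beta nu p B <> m_infty -> is_finite (fext h (rate g s2 p B - re))).
Proof.
  intros Hpos Hnp. unfold user_value.
  destruct (fext h (rate g s2 p B - re)) as [x| |]; [| contradiction |].
  - split; [discriminate | reflexivity].
  - unfold Rbar_mult, Rbar_mult'. destruct (Rle_dec 0 (nu * c)); [|lra].
    destruct (Rle_lt_or_eq_dec 0 (nu * c)); [|lra]. simpl. split; [discriminate | tauto].
Qed.

Lemma fext_not_pinf (h : R -> R) (x : R) :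
  (forall a b, 0 < a -> a < b -> h a < h b) -> fext h x <> p_infty.
Proof.
  intros Hinc. unfold fext. destruct (Rlt_dec 0 x); [discriminate|].
  apply right_lim0_spec, Hinc.
Qed.

Lemma fext_pos (h : R -> R) (x : R) : 0 < x -> fext h x = Finite (h x).
Proof. intros Hx. unfold fext. destruct (Rlt_dec 0 x); [reflexivity | lra]. Qed.

Section OptimalAllocation.

Context {N : nat} {Btot : R} {g s2 pcir c re rmin beta nu : nat -> R}
  {f : nat -> R -> R} {p B : nat -> R}.

Hypothesis HN : (1 <= N)%nat.
Hypothesis HBtot : 0 < Btot.
Hypothesis Hpar : forall n, (n < N)%nat ->
  0 < g n /\ 0 < s2 n /\ 0 < pcir n /\ 0 < c n /\ 0 <= re n /\
  0 < rmin n /\ re n <= rmin n /\ 0 < beta n /\ 0 < nu n.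
Hypothesis Hf : forall n, (n < N)%nat -> forall x, 0 < x ->
  ex_derive (f n) x /\ 0 < Derive (f n) x /\
  ex_derive (Derive (f n)) x /\ Derive (Derive (f n)) x <= 0.
Hypothesis Hopt : globally_optimal N Btot g s2 pcir c f re rmin beta nu p B.

Local Notation r n := (rate (g n) (s2 n) (p n) (B n)).
Local Notation y n := (snr1 (g n) (s2 n) (p n) (B n)).
Local Notation price n := (bandwidth_price (g n) (s2 n) (beta n) (nu n) (y n)).
Local Notation target n := (gamma_target (g n) (s2 n) (c n) (beta n) (y n - 1)).
Local Notation value n q b :=
  (user_value (g n) (s2 n) (pcir n) (c n) (f n) (re n) (beta n) (nu n) q b).
Local Notation F n := (real (fext (f n) (r n - re n))).
Local Notation t n := (nu n * c n * F n - nu n * beta n * (p n + pcir n)).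
Local Notation pw n := (power_for_rate (g n) (s2 n)).

Ltac params n Hn := destruct (Hpar n Hn) as (Hg & Hs & Hpc & Hc & Hre & Hrm & Hrr & Hbeta & Hnu).

Lemma utility_increasing (n : nat) : (n < N)%nat ->
  forall a b, 0 < a -> a < b -> f n a < f n b.
Proof.
  intros Hn. apply increasing_of_derive. intros x Hx.
  destruct (Hf n Hn x Hx) as (Hd & Hpos & _). split; assumption.
Qed.

Lemma utility_derive_nonincreasing (n : nat) : (n < N)%nat ->
  forall a b, 0 < a -> a <= b -> Derive (f n) b <= Derive (f n) a.
Proof.
  intros Hn. apply derive_nonincreasing. intros x Hx.
  destruct (Hf n Hn x Hx) as (_ & _ & Hd & Hneg). split; assumption.
Qed.

Lemma opt_user_feasible (n : nat) : (n < N)%nat -> 0 <= p n /\ 0 < B n /\ rmin n <= r n.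
Proof.
  intros Hn. destruct Hopt as [[HpB [_ Hrate]] _].
  destruct (HpB n Hn). auto.
Qed.

Lemma opt_budget : rsum N B <= Btot.
Proof. destruct Hopt as [[_ [Hsum _]] _]. exact Hsum. Qed.

Lemma opt_user_snr (n : nat) : (n < N)%nat ->
  1 < y n /\ exp (r n * ln 2 / B n) = y n /\ p n = pw n (r n) (B n).
Proof.
  intros Hn. params n Hn. destruct (opt_user_feasible n Hn) as (Hp & HB & Hr).
  destruct (rate_snr1 (g n) (s2 n) (p n) (B n) Hg Hs HB Hp) as [Hexp Hpw].
  split; [apply snr1_gt1; auto; lra | auto].
Qed.

(* The optimal value is not -oo: it dominates the value of the equal-bandwidth allocation
   with rates r^min + 1, all of whose utilities are finite. *)
Lemma opt_objective_not_minf : objective N g s2 pcir c f re beta nu p B <> m_infty.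
Proof.
  set (Bref := fun _ : nat => Btot / INR N).
  set (pref := fun k => pw k (rmin k + 1) (Bref k)).
  assert (HNpos : 0 < INR N) by (apply lt_0_INR; lia).
  assert (HBref : 0 < Btot / INR N) by (apply Rdiv_lt_0_compat; lra).
  assert (Hrate : forall k, (k < N)%nat -> rate (g k) (s2 k) (pref k) (Bref k) = rmin k + 1).
  { intros k Hk. params k Hk. apply rate_power_for_rate; assumption. }
  assert (Hfeas : feasible N Btot g s2 rmin pref Bref).
  { split; [|split].
    - intros k Hk. params k Hk. split; [apply power_for_rate_nonneg; auto; lra | exact HBref].
    - unfold Bref. rewrite rsum_const. right. field. lra.
    - intros k Hk. rewrite Hrate by exact Hk. lra. }
  assert (Hfin : objective N g s2 pcir c f re beta nu pref Bref =
                 Finite (rsum N (fun k => nu k * c k * f k (rmin k + 1 - re k)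
                                          - nu k * beta k * (pref k + pcir k)))).
  { rewrite objective_as_sum. apply Rbar_sum_finite. intros k Hk. params k Hk.
    apply user_value_finite. rewrite Hrate by exact Hk. unfold fext.
    destruct (Rlt_dec 0 (rmin k + 1 - re k)); [reflexivity | lra]. }
  intro Hminf. destruct Hopt as [_ Hbest].
  specialize (Hbest pref Bref Hfeas). rewrite Hfin, Hminf in Hbest. exact Hbest.
Qed.

Lemma opt_utility_finite (n : nat) : (n < N)%nat -> fext (f n) (r n - re n) = Finite (F n).
Proof.
  intros Hn.
  assert (Hcases : forall k, (k < N)%nat -> value k (p k) (B k) <> p_infty /\
            (value k (p k) (B k) <> m_infty -> is_finite (fext (f k) (r k - re k)))).
  { intros k Hk. params k Hk. apply user_value_cases; [nra|].
    apply fext_not_pinf, utility_increasing, Hk. }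
  symmetry. apply (Hcases n Hn).
  apply (Rbar_sum_terms_finite N (fun k => value k (p k) (B k)));
    [| exact opt_objective_not_minf | exact Hn].
  intros k Hk. apply Hcases, Hk.
Qed.

Lemma opt_value (n : nat) : (n < N)%nat -> value n (p n) (B n) = Finite (t n).
Proof. intros Hn. apply user_value_finite, opt_utility_finite, Hn. Qed.

Lemma opt_dominates (p' B' T' : nat -> R) :
  feasible N Btot g s2 rmin p' B' ->
  (forall k, (k < N)%nat -> value k (p' k) (B' k) = Finite (T' k)) ->
  rsum N T' <= rsum N (fun k => t k).
Proof.
  intros Hfeas HT. destruct Hopt as [_ Hbest]. specialize (Hbest p' B' Hfeas).
  rewrite !objective_as_sum, (Rbar_sum_finite N _ T' HT),
    (Rbar_sum_finite N _ (fun k => t k) opt_value) in Hbest.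
  exact Hbest.
Qed.

Lemma feasible_update (Bud Bud' : R) (p' B' : nat -> R) (n : nat) (q b : R) : (n < N)%nat ->
  feasible N Bud g s2 rmin p' B' -> 0 <= q -> 0 < b -> rmin n <= rate (g n) (s2 n) q b ->
  rsum N B' + (b - B' n) <= Bud' ->
  feasible N Bud' g s2 rmin (update n q p') (update n b B').
Proof.
  intros Hn [HpB [Hsum Hrate]] Hq Hb Hr Hbudget. split; [|split].
  - intros k Hk. destruct (Nat.eq_dec k n) as [->|Hne].
    + rewrite !update_eq. auto.
    + rewrite !update_neq by exact Hne. auto.
  - rewrite rsum_update by exact Hn. exact Hbudget.
  - intros k Hk. destruct (Nat.eq_dec k n) as [->|Hne].
    + rewrite !update_eq. exact Hr.
    + rewrite !update_neq by exact Hne. auto.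
Qed.

Lemma values_update (p' B' T' : nat -> R) (n : nat) (q b T : R) :
  (forall k, (k < N)%nat -> value k (p' k) (B' k) = Finite (T' k)) ->
  value n q b = Finite T ->
  forall k, (k < N)%nat -> value k (update n q p' k) (update n b B' k) = Finite (update n T T' k).
Proof.
  intros HT Hnew k Hk. destruct (Nat.eq_dec k n) as [->|Hne].
  - rewrite !update_eq. exact Hnew.
  - rewrite !update_neq by exact Hne. auto.
Qed.

Lemma opt_single_deviation (n : nat) (q b T : R) : (n < N)%nat ->
  0 <= q -> 0 < b -> rmin n <= rate (g n) (s2 n) q b -> rsum N B + (b - B n) <= Btot ->
  value n q b = Finite T -> T <= t n.
Proof.
  intros Hn Hq Hb Hr Hbudget HT.
  assert (Hle := opt_dominates _ _ _
    (feasible_update Btot Btot p B n q b Hn (proj1 Hopt) Hq Hb Hr Hbudget)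
    (values_update p B (fun k => t k) n q b T opt_value HT)).
  rewrite rsum_update in Hle by exact Hn. lra.
Qed.

Lemma opt_pair_deviation (n m : nat) (qn bn qm bm Tn Tm : R) :
  (n < N)%nat -> (m < N)%nat -> n <> m ->
  0 <= qn -> 0 < bn -> rmin n <= rate (g n) (s2 n) qn bn -> value n qn bn = Finite Tn ->
  0 <= qm -> 0 < bm -> rmin m <= rate (g m) (s2 m) qm bm -> value m qm bm = Finite Tm ->
  rsum N B + (bn - B n) + (bm - B m) <= Btot ->
  Tn + Tm <= t n + t m.
Proof.
  intros Hn Hm Hnm Hqn Hbn Hrn HTn Hqm Hbm Hrm HTm Hbudget.
  assert (Hfm := feasible_update Btot (rsum N B + (bm - B m)) p B m qm bm Hm (proj1 Hopt)
                  Hqm Hbm Hrm (Rle_refl _)).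
  assert (Hfnm := feasible_update _ Btot _ _ n qn bn Hn Hfm Hqn Hbn Hrn
    ltac:(rewrite rsum_update, update_neq by auto; lra)).
  assert (Hvm := values_update p B (fun k => t k) m qm bm Tm opt_value HTm).
  assert (Hle := opt_dominates _ _ _ Hfnm (values_update _ _ _ n qn bn Tn Hvm HTn)).
  rewrite rsum_update, rsum_update, update_neq in Hle by auto. lra.
Qed.

Lemma fixed_rate_reallocation (n : nat) (b : R) : (n < N)%nat -> 0 < b ->
  0 <= pw n (r n) b /\ rmin n <= rate (g n) (s2 n) (pw n (r n) b) b /\
  value n (pw n (r n) b) b = Finite (nu n * c n * F n - nu n * beta n * (pw n (r n) b + pcir n)).
Proof.
  intros Hn Hb. params n Hn. destruct (opt_user_feasible n Hn) as (_ & _ & Hr).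
  assert (Hrate : rate (g n) (s2 n) (pw n (r n) b) b = r n) by (apply rate_power_for_rate; auto).
  split; [apply power_for_rate_nonneg; auto; lra|]. rewrite Hrate. split; [exact Hr|].
  apply user_value_finite. rewrite Hrate. apply opt_utility_finite, Hn.
Qed.

Lemma opt_bandwidth_increase (n : nat) (b : R) : (n < N)%nat -> 0 < b ->
  rsum N B + (b - B n) <= Btot -> nu n * beta n * p n <= nu n * beta n * pw n (r n) b.
Proof.
  intros Hn Hb Hbudget. destruct (fixed_rate_reallocation n b Hn Hb) as (Hq & Hr & Hv).
  assert (Hle := opt_single_deviation n _ b _ Hn Hq Hb Hr Hbudget Hv). lra.
Qed.

Lemma opt_bandwidth_swap (n m : nat) (b : R) : (n < N)%nat -> (m < N)%nat -> n <> m ->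
  0 < b < B n + B m ->
  nu n * beta n * p n + nu m * beta m * p m <=
  nu n * beta n * pw n (r n) b + nu m * beta m * pw m (r m) (B n + B m - b).
Proof.
  intros Hn Hm Hnm Hb.
  destruct (fixed_rate_reallocation n b Hn ltac:(lra)) as (Hqn & Hrn & Hvn).
  destruct (fixed_rate_reallocation m (B n + B m - b) Hm ltac:(lra)) as (Hqm & Hrm & Hvm).
  assert (Hbudget : rsum N B + (b - B n) + (B n + B m - b - B m) <= Btot)
    by (assert (Hsum := opt_budget); lra).
  assert (Hle := opt_pair_deviation n m _ b _ (B n + B m - b) _ _ Hn Hm Hnm
                   Hqn ltac:(lra) Hrn Hvn Hqm ltac:(lra) Hrm Hvm Hbudget). lra.
Qed.

Lemma opt_rate_deviation (n : nat) (s : R) : (n < N)%nat ->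
  rmin n <= r n + s -> 0 < r n - re n + s ->
  nu n * c n * f n (r n - re n + s) - nu n * beta n * pw n (r n + s) (B n)
  <= nu n * c n * F n - nu n * beta n * p n.
Proof.
  intros Hn Hrs Hpos. params n Hn. destruct (opt_user_feasible n Hn) as (_ & HB & _).
  assert (Hrate : rate (g n) (s2 n) (pw n (r n + s) (B n)) (B n) = r n + s)
    by (apply rate_power_for_rate; auto).
  assert (Hv : value n (pw n (r n + s) (B n)) (B n) =
     Finite (nu n * c n * f n (r n - re n + s) - nu n * beta n * (pw n (r n + s) (B n) + pcir n))).
  { apply user_value_finite. rewrite Hrate. unfold fext.
    destruct (Rlt_dec 0 (r n + s - re n)); [do 2 f_equal; ring | lra]. }
  assert (Hle := opt_single_deviation n (pw n (r n + s) (B n)) (B n) _ Hn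
    ltac:(apply power_for_rate_nonneg; auto; lra) HB ltac:(rewrite Hrate; exact Hrs)
    ltac:(assert (Hsum := opt_budget); lra) Hv).
  lra.
Qed.

(* The bandwidth budget is exhausted: otherwise user 0 could use the slack to save power,
   since its bandwidth price is positive. *)
Lemma opt_full_bandwidth : rsum N B = Btot.
Proof.
  destruct (Rle_lt_or_eq_dec _ _ opt_budget) as [Hslack|Hfull]; [exfalso | exact Hfull].
  assert (H0 : (0 < N)%nat) by lia. params 0%nat H0.
  destruct (opt_user_feasible 0 H0) as (_ & HB0 & _).
  destruct (opt_user_snr 0 H0) as (Hy & Hexp & Hp).
  assert (Hder := power_bandwidth_derivative (g 0%nat) (s2 0%nat) (beta 0%nat) (nu 0%nat)
                    (r 0%nat) (B 0%nat) 1 Hg HB0).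
  rewrite Hexp in Hder.
  assert (Hmax := local_max_right _ 0 _ (Btot - rsum N B) Hder ltac:(lra)).
  assert (Hprice : 0 < price 0%nat) by (apply bandwidth_price_pos; assumption).
  enough (1 * price 0%nat <= 0) by lra.
  apply Hmax. intros b Hb.
  rewrite Rmult_0_r, Rplus_0_r, <- Hp, Rmult_1_l.
  assert (Hle := opt_bandwidth_increase 0%nat (B 0%nat + b) H0 ltac:(lra) ltac:(lra)). lra.
Qed.

(* All users share the same bandwidth price: swapping bandwidth between users n and 0 is
   a two-sided local maximum, with derivative price n - price 0. *)
Lemma opt_common_price (n : nat) : (n < N)%nat -> price n = price 0%nat.
Proof.
  intros Hn. destruct (Nat.eq_dec n 0) as [->|Hn0]; [reflexivity|].
  assert (H0 : (0 < N)%nat) by lia.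
  destruct (opt_user_feasible n Hn) as (_ & HBn & _).
  destruct (opt_user_feasible 0 H0) as (_ & HB0 & _).
  destruct (opt_user_snr n Hn) as (_ & Hexpn & Hpn).
  destruct (opt_user_snr 0 H0) as (_ & Hexp0 & Hp0).
  assert (Hdn := power_bandwidth_derivative (g n) (s2 n) (beta n) (nu n) (r n) (B n) 1
                   ltac:(apply Hpar; exact Hn) HBn).
  assert (Hd0 := power_bandwidth_derivative (g 0%nat) (s2 0%nat) (beta 0%nat) (nu 0%nat)
                   (r 0%nat) (B 0%nat) (-1) ltac:(apply Hpar; exact H0) HB0).
  rewrite Hexpn in Hdn. rewrite Hexp0 in Hd0.
  assert (Hder := is_derive_plus _ _ _ _ _ Hdn Hd0). simpl in Hder.
  set (d := Rmin (B n) (B 0%nat)).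
  assert (Hd : 0 < d /\ d <= B n /\ d <= B 0%nat) by (unfold d, Rmin; destruct Rle_dec; lra).
  assert (Hloc : forall b, - d < b < d ->
            - (nu n * beta n * pw n (r n) (B n + 1 * b))
            + - (nu 0%nat * beta 0%nat * pw 0%nat (r 0%nat) (B 0%nat + -1 * b))
            <= - (nu n * beta n * pw n (r n) (B n + 1 * 0))
            + - (nu 0%nat * beta 0%nat * pw 0%nat (r 0%nat) (B 0%nat + -1 * 0))).
  { intros b Hb. rewrite !Rmult_0_r, !Rplus_0_r, <- Hpn, <- Hp0.
    replace (B 0%nat + -1 * b) with (B n + B 0%nat - (B n + 1 * b)) by ring.
    assert (Hle := opt_bandwidth_swap n 0 (B n + 1 * b) Hn H0 Hn0 ltac:(lra)). lra. }
  assert (Hr := local_max_right _ 0 _ d Hder (proj1 Hd) ltac:(intros; apply Hloc; lra)).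
  assert (Hl := local_max_left _ 0 _ d Hder (proj1 Hd) ltac:(intros; apply Hloc; lra)).
  unfold plus in Hr, Hl. simpl in Hr, Hl. lra.
Qed.

Lemma opt_rate_derivative (n : nat) : (n < N)%nat -> 0 < r n - re n ->
  is_derive (fun s => nu n * c n * f n (r n - re n + s) - nu n * beta n * pw n (r n + s) (B n)) 0
    (nu n * c n * (Derive (f n) (r n - re n) - target n)).
Proof.
  intros Hn Hpos. params n Hn. destruct (opt_user_feasible n Hn) as (_ & HB & _).
  destruct (opt_user_snr n Hn) as (_ & Hexp & _).
  unfold power_for_rate, gamma_target. rewrite <- Hexp.
  auto_derive.
  - rewrite Rplus_0_r. apply (Hf n Hn _ Hpos).
  - change (fun x => f n x) with (f n). rewrite !Rplus_0_r. unfold Rdiv. field. lra.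
Qed.

Lemma opt_rate_local_max (n : nat) (s : R) : (n < N)%nat -> 0 < r n - re n ->
  rmin n <= r n + s -> 0 < r n - re n + s ->
  nu n * c n * f n (r n - re n + s) - nu n * beta n * pw n (r n + s) (B n)
  <= nu n * c n * f n (r n - re n + 0) - nu n * beta n * pw n (r n + 0) (B n).
Proof.
  intros Hn Hpos Hrs Hpos_s. rewrite !Rplus_0_r.
  destruct (opt_user_snr n Hn) as (_ & _ & Hp). rewrite <- Hp.
  assert (HF : F n = f n (r n - re n)) by (rewrite fext_pos by exact Hpos; reflexivity).
  rewrite <- HF. apply opt_rate_deviation; assumption.
Qed.

Lemma opt_rate_stationary (n : nat) : (n < N)%nat -> rmin n < r n ->
  Derive (f n) (r n - re n) = target n.
Proof.
  intros Hn Hlt. params n Hn.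
  assert (Hpos : 0 < r n - re n) by lra.
  assert (Hder := opt_rate_derivative n Hn Hpos).
  assert (Hloc : forall s, - (r n - rmin n) < s < r n - rmin n ->
    nu n * c n * f n (r n - re n + s) - nu n * beta n * pw n (r n + s) (B n)
    <= nu n * c n * f n (r n - re n + 0) - nu n * beta n * pw n (r n + 0) (B n))
    by (intros s Hs_range; apply opt_rate_local_max; auto; lra).
  assert (Hl := local_max_left _ 0 _ (r n - rmin n) Hder ltac:(lra)
                  ltac:(intros; apply Hloc; lra)).
  assert (Hr := local_max_right _ 0 _ (r n - rmin n) Hder ltac:(lra)
                  ltac:(intros; apply Hloc; lra)).
  assert (Hzero : nu n * c n * (Derive (f n) (r n - re n) - target n) = 0) by lra.
  apply Rmult_integral in Hzero as [Hz|Hz]; [nra | lra].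
Qed.

Lemma opt_rate_upper (n : nat) : (n < N)%nat -> re n < r n ->
  Derive (f n) (r n - re n) <= target n.
Proof.
  intros Hn Hlt. params n Hn. destruct (opt_user_feasible n Hn) as (_ & _ & Hr).
  assert (Hpos : 0 < r n - re n) by lra.
  assert (Hle := local_max_right _ 0 _ 1 (opt_rate_derivative n Hn Hpos) ltac:(lra)
                   ltac:(intros s Hs_range; apply opt_rate_local_max; auto; lra)).
  assert (0 < nu n * c n) by nra. nra.
Qed.

Lemma opt_corner (n : nat) : (n < N)%nat -> r n = re n ->
  (exists xi, 0 <= xi /\ deriv_value (f n) xi (target n)) -> deriv_value (f n) 0 (target n).
Proof.
  intros Hn Hcorner [xi [Hxi [[Hxi_pos HD]|[Hx0 Hlim]]]]; [|subst xi; right; auto].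
  right. split; [reflexivity|]. params n Hn.
  destruct (opt_user_feasible n Hn) as (_ & HB & Hr).
  destruct (opt_user_snr n Hn) as (_ & Hexp & Hp).
  assert (Hq := power_rate_derivative (g n) (s2 n) (r n) (B n) Hg HB). rewrite Hexp in Hq.
  assert (Htarget : target n = nu n * beta n * (s2 n / g n * ln 2 * y n) / (nu n * c n))
    by (unfold gamma_target; field; lra).
  rewrite Htarget in HD |- *.
  assert (Hlim0 : filterlim (f n) (at_right 0) (locally (F n))).
  { destruct (right_lim0_spec (f n) (utility_increasing n Hn)) as [_ Hl].
    set (Fn := F n).
    assert (HF : fext (f n) (r n - re n) = Finite Fn) by exact (opt_utility_finite n Hn).
    assert (Hat0 : fext (f n) (r n - re n) = right_lim0 (f n))
      by (unfold fext; destruct (Rlt_dec 0 (r n - re n)); [lra | reflexivity]).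
    rewrite Hat0 in HF. rewrite HF in Hl. exact Hl. }
  apply (derivative_limit_at_corner (f n) (fun s => pw n (r n + s) (B n)) (F n) _ _ _ xi);
    try assumption; try nra.
  - intros x Hx. apply (Hf n Hn x Hx).
  - apply utility_derive_nonincreasing, Hn.
  - intros s Hs_pos. rewrite Rplus_0_r, <- Hp.
    assert (Hdev := opt_rate_deviation n s Hn ltac:(lra) ltac:(lra)).
    replace (r n - re n + s) with s in Hdev by lra. lra.
Qed.

Lemma opt_gamma : exists gam : nat -> R, forall n, (n < N)%nat ->
  is_gamma (f n) (re n) (target n) (gam n) /\ Rmax (gam n) (rmin n) = r n.
Proof.
  apply (choice (fun n gm => (n < N)%nat ->
    is_gamma (f n) (re n) (target n) gm /\ Rmax gm (rmin n) = r n)).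
  intros n. destruct (Nat.lt_ge_cases n N) as [Hn|Hn]; [| exists 0; lia].
  params n Hn. destruct (opt_user_feasible n Hn) as (_ & _ & Hr).
  destruct (gamma_from_optimality (f n) (re n) (rmin n) (r n) (target n)
              (utility_derive_nonincreasing n Hn) Hrr Hr
              (opt_rate_stationary n Hn) (opt_rate_upper n Hn) (opt_corner n Hn)) as [gm Hgm].
  exists gm. intros _. exact Hgm.
Qed.
End OptimalAllocation.

Theorem theorem2 (N : nat) (Btot : R) (g s2 pcir c re rmin : nat -> R)
  (f : nat -> R -> R) (beta nu : nat -> R) :
  (1 <= N)%nat -> 0 < Btot ->
  (forall n, (n < N)%nat ->
     0 < g n /\ 0 < s2 n /\ 0 < pcir n /\ 0 < c n /\ 0 <= re n /\
     0 < rmin n /\ re n <= rmin n /\ 0 < beta n /\ 0 < nu n) ->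
  (forall n, (n < N)%nat -> forall x, 0 < x ->
     ex_derive (f n) x /\ 0 < Derive (f n) x /\
     ex_derive (Derive (f n)) x /\ Derive (Derive (f n)) x <= 0) ->
  forall p B : nat -> R,
  globally_optimal N Btot g s2 pcir c f re rmin beta nu p B ->
  exists lam : R, 0 < lam /\
  exists gam : nat -> R,
    (forall n, (n < N)%nat ->
       is_gamma (f n) (re n)
         (gamma_target (g n) (s2 n) (c n) (beta n)
            (psi (g n) (s2 n) (beta n) (nu n) lam)) (gam n)) /\
    rsum N (fun n => Bcal (gam n) (rmin n) (psi (g n) (s2 n) (beta n) (nu n) lam))
      = Btot /\
    (forall n, (n < N)%nat ->
       B n = Bcal (gam n) (rmin n) (psi (g n) (s2 n) (beta n) (nu n) lam) /\
       p n = s2 n * B n * psi (g n) (s2 n) (beta n) (nu n) lam / g n).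
Proof.
  intros HN HBtot Hpar Hf p B Hopt.
  set (lam := bandwidth_price (g 0%nat) (s2 0%nat) (beta 0%nat) (nu 0%nat)
                (snr1 (g 0%nat) (s2 0%nat) (p 0%nat) (B 0%nat))).
  assert (Hpsi : forall n, (n < N)%nat ->
            psi (g n) (s2 n) (beta n) (nu n) lam = snr1 (g n) (s2 n) (p n) (B n) - 1).
  { intros n Hn. destruct (Hpar n Hn) as (Hg & Hs & _ & _ & _ & _ & _ & Hbeta & Hnu).
    unfold lam. rewrite <- (opt_common_price HN HBtot Hpar Hf Hopt n Hn).
    apply psi_at_price; try assumption. apply (opt_user_snr Hpar Hopt n Hn). }
  destruct (opt_gamma HN HBtot Hpar Hf Hopt) as [gam Hgam].
  assert (Halloc : forall n, (n < N)%nat ->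
            B n = Bcal (gam n) (rmin n) (psi (g n) (s2 n) (beta n) (nu n) lam) /\
            p n = s2 n * B n * psi (g n) (s2 n) (beta n) (nu n) lam / g n).
  { intros n Hn. rewrite Hpsi by exact Hn.
    destruct (Hpar n Hn) as (Hg & Hs & _ & _ & _ & Hrm & _).
    destruct (opt_user_feasible Hopt n Hn) as (Hp & HB & Hr).
    apply allocation_from_rate; try assumption; [lra | apply Hgam, Hn]. }
  exists lam. split.
  { assert (H0 : (0 < N)%nat) by lia.
    destruct (Hpar 0%nat H0) as (Hg & Hs & _ & _ & _ & _ & _ & Hbeta & Hnu).
    apply bandwidth_price_pos; try assumption. apply (opt_user_snr Hpar Hopt 0%nat H0). }
  exists gam. split; [|split].
  - intros n Hn. rewrite Hpsi by exact Hn. apply Hgam, Hn.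
  - rewrite <- (opt_full_bandwidth HN HBtot Hpar Hf Hopt).
    apply rsum_ext. intros n Hn. symmetry. apply Halloc, Hn.
  - exact Halloc.
Qed.
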